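(* Let $n\geq 2$ and let $k$ be a positive integer with $k+2^k-1\leq n$. For every prime number $p$ with $n-2^k+1\leq p\leq (n-k-2^k+3)2^k-3$, there is an arithmetical structure $(r_1,\dots,r_n)$ on $K_n$ with $r_1=p$.
   Context: An arithmetical structure on the complete graph $K_n$ is an $n$-tuple $(r_1,r_2,\dots,r_n)$ of positive integers with $\gcd(r_1,\dots,r_n)=1$ such that $r_j$ divides $\sum_{i=1}^n r_i$ for every $j$. The entries are always listed so that $r_1\geq r_2\geq\dots\geq r_n$; thus $r_1$ is the largest value of the structure. *)

From mathcomp Require Import all_boot.

Definition arith_struct_Kn (n : nat) (r : seq nat) : Prop :=
  [/\ size r = n,
      all (fun x => 0 < x) r,
      sorted geq r,
      foldr gcdn 0 r = 1
    & all (fun x => x %| sumn r) r].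

From mathcomp Require Import all_boot.
From mathcomp Require Import zify.

(* Proof of Proposition 2.5.  Put K = 2^k and t = n + 1 - K.  The list
     p, ..., p (K - 1 times), 2^e_1, ..., 2^e_t   (sorted nonincreasingly)
   is an arithmetical structure on K_n as soon as the 2^e_i are at most K,
   sum to p, and t >= 2: the total is K * p, which every entry divides, and
   the gcd is 1 because it divides the prime p while p cannot divide all of
   at least two positive parts summing to p.

   It
   then shows that p is a sum of exactly t powers of two at most 2^k under
   the numerical hypotheses of the proposition: write p = q 2^k + r, expand
   r in binary, which gives few parts ([binary_expansion]), and split parts
   2^e = 2^(e-1) + 2^(e-1) until there are t of them ([refine_pow2_parts]). *)

Lemma gcd_seq_dvd {l : seq nat} {x : nat} : x \in l -> foldr gcdn 0 l %| x.
Proof.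
elim: l => [//|a l IH] /=; rewrite in_cons => /orP [/eqP ->|/IH h].
  exact: dvdn_gcdl.
exact: dvdn_trans (dvdn_gcdr _ _) h.
Qed.

Lemma mem_leq_sumn {l : seq nat} {x : nat} : x \in l -> x <= sumn l.
Proof.
elim: l => [//|a l IH] /=; rewrite in_cons => /orP [/eqP ->|/IH h].
  exact: leq_addr.
exact: leq_trans h (leq_addl _ _).
Qed.

Lemma sorted_nseq_cat (x c : nat) (l : seq nat) :
  sorted geq l -> all (fun y => y <= x) l -> sorted geq (nseq c x ++ l).
Proof.
move=> sl lx; elim: c => [//|c IH] /=.
case: c IH => [|c] /= IH; last by rewrite leqnn.
by case: l sl lx {IH} => //= y l -> /andP [-> _].
Qed.

(* If at least two positive parts sum to the prime p, then together with p
   they have gcd 1: p cannot divide all of them. *)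
Lemma gcd_prime_parts {p : nat} {s l : seq nat} :
  prime p -> all (fun x => 0 < x) s -> 2 <= size s -> sumn s = p ->
  p \in l -> {subset s <= l} -> foldr gcdn 0 l = 1.
Proof.
move=> pr_p s_gt0 size_s sum_s pl sl.
have g_dvd_p := gcd_seq_dvd pl.
have [_ p_dvd] := primeP pr_p.
have /orP [/eqP //|/eqP g_p] := p_dvd _ g_dvd_p.
case: s s_gt0 size_s sum_s sl => [|a [|b s]] //= /and3P [a_gt0 b_gt0 _] _.
move=> sum_s sl.
have /dvdn_leq le_pa : p %| a by rewrite -g_p gcd_seq_dvd // sl ?mem_head.
have /dvdn_leq le_pb : p %| b by rewrite -g_p gcd_seq_dvd // sl ?inE ?eqxx ?orbT.
move: (le_pa a_gt0) (le_pb b_gt0); lia.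
Qed.

Lemma arith_struct_of_parts {p c : nat} {s : seq nat} :
  prime p -> 0 < c -> all (fun x => 0 < x) s -> 2 <= size s -> sumn s = p ->
  all (fun x => x %| c.+1) s ->
  arith_struct_Kn (c + size s) (nseq c p ++ sort geq s) /\
  head 0 (nseq c p ++ sort geq s) = p.
Proof.
move=> pr_p c_gt0 s_gt0 size_s sum_s s_dvd.
have perm_s : perm_eq (sort geq s) s by rewrite perm_sort.
have sum_r : sumn (nseq c p ++ sort geq s) = c.+1 * p.
  by rewrite sumn_cat sumn_nseq (perm_sumn perm_s) sum_s mulSn addnC mulnC.
split; last by rewrite -(prednK c_gt0).
split.
- by rewrite size_cat size_nseq size_sort.
- by rewrite all_cat all_nseq prime_gt0 // orbT (perm_all _ perm_s).
- apply: sorted_nseq_cat; first by apply: sort_sorted => x y; apply: leq_total.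
  by rewrite (perm_all _ perm_s); apply/allP => x xs; rewrite -sum_s mem_leq_sumn.
- apply: (gcd_prime_parts pr_p s_gt0 size_s sum_s).
    by rewrite mem_cat mem_nseq c_gt0 eqxx.
  by move=> x xs; rewrite mem_cat (perm_mem perm_s) xs orbT.
- rewrite sum_r all_cat all_nseq dvdn_mull ?orbT //= (perm_all _ perm_s).
  by apply/allP => x /(allP s_dvd) x_dvd; apply: dvdn_mulr.
Qed.

Lemma binary_expansion {j r : nat} : r < 2 ^ j -> exists es : seq nat,
  [/\ all (fun e => e < j) es, sumn (map (expn 2) es) = r, size es <= j
    & r.+1 < 2 ^ j -> size es < j].
Proof.
elim: j r => [|j IH] r.
  by rewrite expn0 ltnS leqn0 => /eqP ->; exists [::].
rewrite expnS => r_lt.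
have lt_es (es : seq nat) : all (fun e => e < j) es -> all (fun e => e < j.+1) es.
  by move=> /allP es_lt; apply/allP => e /es_lt /ltnW.
have [r_small|r_big] := ltnP r (2 ^ j).
  have [es [es_lt sum_es size_es full_es]] := IH r r_small.
  exists es; split => //; first exact: lt_es.
  by apply: leqW.
have [es [es_lt sum_es size_es full_es]] := IH (r - 2 ^ j) ltac:(lia).
exists (j :: es); split => /=.
- by rewrite ltnSn lt_es.
- by rewrite sum_es; lia.
- by rewrite ltnS.
- by move=> r_lt'; rewrite ltnS full_es //; lia.
Qed.

Lemma sum_pow2_exp0 (es : seq nat) : ~~ has (fun e => 0 < e) es ->
  sumn (map (expn 2) es) = size es.
Proof.
elim: es => [//|e es IH] /=; rewrite negb_or -eqn0Ngt => /andP [/eqP -> h].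
by rewrite IH.
Qed.

(* If a sum of powers of two has fewer terms than its value, some term 2^e
   with e > 0 can be split as 2^(e-1) + 2^(e-1), adding one term. *)
Lemma split_pow2_part {k : nat} {es : seq nat} :
  all (fun e => e <= k) es -> size es < sumn (map (expn 2) es) ->
  exists es', [/\ all (fun e => e <= k) es', size es' = (size es).+1
     & sumn (map (expn 2) es') = sumn (map (expn 2) es)].
Proof.
move=> es_le size_lt.
have /hasP [e e_es e_gt0] : has (fun e => 0 < e) es.
  by apply/negPn/negP => /sum_pow2_exp0 sum_es; rewrite sum_es ltnn in size_lt.
have perm_es := perm_to_rem e_es.
exists [:: e.-1, e.-1 & rem e es]; split.
- move: es_le; rewrite (perm_all _ perm_es) /= => /andP [e_le ->].
  by rewrite (leq_trans (leq_pred e) e_le).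
- by rewrite (perm_size perm_es).
- rewrite (perm_sumn (perm_map _ perm_es)) /= -[in 2 ^ e](prednK e_gt0) expnS.
  lia.
Qed.

Lemma refine_pow2_parts {k d : nat} {es : seq nat} :
  all (fun e => e <= k) es -> size es <= d -> d <= sumn (map (expn 2) es) ->
  exists es', [/\ all (fun e => e <= k) es', size es' = d
     & sumn (map (expn 2) es') = sumn (map (expn 2) es)].
Proof.
elim: d => [|d IH] es_le size_le d_le.
  by exists es; split => //; apply/eqP; rewrite -leqn0.
have [size_eq|size_lt] := eqVneq (size es) d.+1; first by exists es.
have [es1 [es1_le size_es1 sum_es1]] := IH es_le ltac:(lia) ltac:(lia).
have [es2 [es2_le size_es2 sum_es2]] :=
  split_pow2_part es1_le ltac:(rewrite size_es1 sum_es1; lia).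
by exists es2; rewrite size_es2 size_es1 sum_es2 sum_es1.
Qed.

(* Under the numerical hypotheses of the proposition, p is a sum of exactly
   t powers of two, each at most 2^k: the q + (binary length of r) parts of
   p = q 2^k + r are at most t, and can then be refined to t parts. *)
Lemma pow2_parts_exact {k t p : nat} :
  0 < t -> t <= p -> p <= (t + 2 - k) * 2 ^ k - 3 ->
  exists es, [/\ all (fun e => e <= k) es, size es = t
                & sumn (map (expn 2) es) = p].
Proof.
move=> t_gt0 t_le p_le.
have K_gt0 : 0 < 2 ^ k by rewrite expn_gt0.
set K := 2 ^ k in K_gt0 p_le *; set m := t + 2 - k in p_le *.
have [esr [esr_lt sum_esr size_esr full_esr]] := binary_expansion (ltn_pmod p K_gt0).
have p_eq := divn_eq p K; set q := p %/ K in p_eq; set r := p %% K in p_eq sum_esr full_esr.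
have q_lt : q < m.
  by rewrite ltnNge; apply/negP => /leq_mul /(_ (leqnn K)); lia.
have size_le : q + size esr <= t.
  have [q_last|] := eqVneq q.+1 m; last by rewrite /m in q_lt *; lia.
  have r_lt : r.+1 < K by move: p_le; rewrite -q_last mulSn; lia.
  by have := full_esr r_lt; lia.
have sum_es0 : sumn (map (expn 2) (nseq q k ++ esr)) = p.
  by rewrite map_cat sumn_cat map_nseq sumn_nseq sum_esr -/K mulnC -p_eq.
have es0_le : all (fun e => e <= k) (nseq q k ++ esr).
  rewrite all_cat all_nseq leqnn orbT.
  by apply/allP => e /(allP esr_lt) /ltnW.
have [es [es_le size_es sum_es]] := refine_pow2_parts (d := t) es0_le
  ltac:(by rewrite size_cat size_nseq) ltac:(by rewrite sum_es0).
by exists es; rewrite sum_es sum_es0.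
Qed.

Theorem proposition2p5 (n k p : nat) :
  2 <= n -> 0 < k -> k + 2 ^ k - 1 <= n ->
  prime p ->
  n + 1 - 2 ^ k <= p -> p <= (n + 3 - k - 2 ^ k) * 2 ^ k - 3 ->
  exists r : seq nat, arith_struct_Kn n r /\ head 0 r = p.
Proof.
move=> n_ge2 k_gt0 kn_le pr_p p_ge p_le.
have K_ge2 : 2 <= 2 ^ k by rewrite -[2]expn1 leq_exp2l.
set K := 2 ^ k in K_ge2 kn_le p_ge p_le; set t := n + 1 - K.
(* t = 1 forces k = 1 and n = 2, where the upper bound on p is 1. *)
have t_ge2 : 2 <= t.
  have [t_small|//] := ltnP t 2; have k1 : k = 1 by rewrite /t in t_small; lia.
  have K2 : K = 2 by rewrite /K k1.
  by move: p_le t_small (prime_gt1 pr_p); rewrite /t K2 k1; lia.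
have p_le' : p <= (t + 2 - k) * K - 3 by rewrite /t; move: p_le; lia.
have [es [es_le size_es sum_es]] := pow2_parts_exact (ltnW t_ge2) p_ge p_le'.
set s := map (expn 2) es.
have s_gt0 : all (fun x => 0 < x) s.
  by apply/allP => _ /mapP [e _ ->]; rewrite expn_gt0.
have s_dvd : all (fun x => x %| (K - 1).+1) s.
  apply/allP => _ /mapP [e e_es ->].
  by rewrite subn1 prednK ?dvdn_exp2l ?(allP es_le) //; lia.
have size_s : K - 1 + size s = n by rewrite size_map size_es /t; lia.
exists (nseq (K - 1) p ++ sort geq s); rewrite -{1}size_s.
apply: (arith_struct_of_parts pr_p _ s_gt0 _ sum_es s_dvd); first by lia.
by rewrite size_map size_es.
Qed.
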